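(* Assume (H1)–(H4) and the data below. Let $d_1\ge d_0$, where $d_0$ is such that for all $d_1\ge d_0$ the function $\underline v^1$ below satisfies the sub-solution inequality of $(E_z)$ pointwise on $\mathbb R\times\mathbb R^N$ (such $d_0$ exists). Let $b>0$ be so small that $b\phi_0(x+z)$ satisfies $\int k(y-x)b\phi_0(y+z)dy-b\phi_0(x+z)+f(x+z,b\phi_0(x+z))b\phi_0(x+z)\ge0$ for all $x,z$, and let $M>0$ be such that $\underline v^1(t,x;z,T)\ge b$ whenever $M-2\delta_0\le x\cdot\xi+cT-ct\le M$ (for all $z,T$). For $z\in\mathbb R^N$, $T>0$ define $$\underline u(t,x)=\begin{cases}\max\{b\phi_0(x+z),\ \underline v^1(t,x;z,T)\}, & x\cdot\xi+cT-ct<M,\\ \underline v^1(t,x;z,T), & x\cdot\xi+cT-ct\ge M,\end{cases}$$ where $\underline v^1(t,x;z,T)=e^{-\mu(x\cdot\xi+cT-ct)}\phi(x+z)-d_1e^{-\mu_1(x\cdot\xi+cT-ct)}\phi_1(x+z)$. Then $\underline u$ is a sub-solution of $(E_z)$: for each $x$, $t\mapsto\underline u(t,x)$ is continuous and differentiable for a.e. $t$, and at every such $t$, $\partial_t\underline u(t,x)\le\int k(y-x)\underline u(t,y)dy-\underline u(t,x)+\underline u(t,x)f(x+z,\underline u(t,x))$.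
   Context: Setting: $N\ge1$, $S^{N-1}$ unit sphere, $e_i$ standard basis vectors. $k\in C^1(\mathbb R^N)$, $k(z)>0$ for $\|z\|<\delta_0$, $k(z)=0$ for $\|z\|\ge\delta_0$ (some $\delta_0>0$), $\int k=1$. $f:\mathbb R^N\times\mathbb R\to\mathbb R$ with $f(x+p_ie_i,u)=f(x,u)$ for given periods $p_i>0$. $(E_z)$: $\partial_tu=\int_{\mathbb R^N}k(y-x)u(t,y)dy-u(t,x)+u(t,x)f(x+z,u(t,x))$. $X_p$: continuous $p$-periodic functions with sup norm, $X_p^+$ nonnegative ones; $a_0(x)=f(x,0)$; $(\mathcal K_{\xi,\mu}v)(x)=\int e^{-\mu(y-x)\cdot\xi}k(y-x)v(y)dy$, $\mathcal K=\mathcal K_{\xi,0}$; $\lambda_0(\xi,\mu,a_0)=\sup\{\mathrm{Re}\lambda:\lambda\in\sigma(\mathcal K_{\xi,\mu}-I+a_0I)\}$ on $X_p$; $\lambda_0=\lambda_0(\xi,0,a_0)$. Principal eigenvalue: algebraically simple eigenvalue with eigenfunction in $X_p^+$, rest of spectrum has smaller real part. (H1) $f\in C^1(\mathbb R^N\times[0,\infty))$, $\sup_{x,u\ge0}\partial_uf<0$, $f(x,u)<0$ for $u$ large. (H2) $\lambda_0>0$. (H3) for all $\xi\in S^{N-1}$, $\mu\ge0$, $\lambda_0(\xi,\mu,a_0)$ is the principal eigenvalue of $\mathcal K_{\xi,\mu}-I+a_0I$. (H4) $f(x,u)=f(x,0)$ for $u\le0$. Known: for each $\xi$ there is $\mu^*(\xi)>0$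 with $c^*(\xi):=\inf_{\mu>0}\lambda_0(\xi,\mu,a_0)/\mu=\lambda_0(\xi,\mu^*(\xi),a_0)/\mu^*(\xi)<\lambda_0(\xi,\mu,a_0)/\mu$ for $\mu\in(0,\mu^*(\xi))$. Data: fix $\xi\in S^{N-1}$, $c>c^*(\xi)$, $\mu\in(0,\mu^*(\xi))$ with $\lambda_0(\xi,\mu,a_0)=c\mu$, and $\mu_1\in(\mu,\min\{2\mu,\mu^*(\xi)\})$ with $c^*(\xi)<\lambda_0(\xi,\mu_1,a_0)/\mu_1<c$. $\phi,\phi_1,\phi_0\in X_p^+$ are positive principal eigenfunctions of $\mathcal K_{\xi,\mu}-I+a_0I$, $\mathcal K_{\xi,\mu_1}-I+a_0I$, $\mathcal K-I+a_0I$ respectively, each with sup equal to $1$. *)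

From Stdlib Require Import Reals Lra ClassicalEpsilon.
Open Scope R_scope.

Fixpoint Rn (n : nat) : Type :=
  match n with O => unit | S m => (R * Rn m)%type end.

Fixpoint vzero (n : nat) : Rn n :=
  match n return Rn n with O => tt | S m => (0, vzero m) end.

Fixpoint vadd (n : nat) : Rn n -> Rn n -> Rn n :=
  match n return Rn n -> Rn n -> Rn n with
  | O => fun _ _ => tt
  | S m => fun x y => (fst x + fst y, vadd m (snd x) (snd y))
  end.

Fixpoint vscale (n : nat) (a : R) : Rn n -> Rn n :=
  match n return Rn n -> Rn n with
  | O => fun _ => tt
  | S m => fun x => (a * fst x, vscale m a (snd x))
  end.

Definition vsub (n : nat) (x y : Rn n) : Rn n := vadd n x (vscale n (-1) y).

Fixpoint dot (n : nat) : Rn n -> Rn n -> R :=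
  match n return Rn n -> Rn n -> R with
  | O => fun _ _ => 0
  | S m => fun x y => fst x * fst y + dot m (snd x) (snd y)
  end.

Definition vnorm (n : nat) (x : Rn n) : R := sqrt (dot n x x).

(* standard basis vector e_i, coordinates indexed 0 .. n-1 *)
Fixpoint vbasis (n i : nat) : Rn n :=
  match n return Rn n with
  | O => tt
  | S m => match i with O => (1, vzero m) | S j => (0, vbasis m j) end
  end.

Definition contRn (n : nat) (g : Rn n -> R) : Prop :=
  forall x eps, 0 < eps -> exists delta, 0 < delta /\
    forall y, vnorm n (vsub n y x) < delta -> Rabs (g y - g x) < eps.

Definition C1fun (n : nat) (g : Rn n -> R) : Prop :=
  exists dg : nat -> Rn n -> R,
    (forall i, (i < n)%nat -> contRn n (dg i)) /\
    (forall i x, (i < n)%nat ->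
       derivable_pt_lim (fun s => g (vadd n x (vscale n s (vbasis n i)))) 0 (dg i x)).

(* total 1-D Riemann integral (0 if not Riemann integrable) *)
Definition RInt (f : R -> R) (a b : R) : R :=
  match excluded_middle_informative (inhabited (Riemann_integrable f a b)) with
  | left H =>
      RiemannInt (proj1_sig (constructive_indefinite_description
                    (fun _ : Riemann_integrable f a b => True)
                    (match H with inhabits pr => ex_intro _ pr I end)))
  | right _ => 0
  end.

Fixpoint boxint (n : nat) : (Rn n -> R) -> Rn n -> R -> R :=
  match n return (Rn n -> R) -> Rn n -> R -> R with
  | O => fun g _ _ => g tt
  | S m => fun g c r =>
      RInt (fun y0 => boxint m (fun y' => g (y0, y')) (snd c) r) (fst c - r) (fst c + r)
  end.

Definition null_set (A : R -> Prop) : Prop :=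
  forall eps, 0 < eps -> exists a b : nat -> R,
    (forall j, a j <= b j) /\
    (forall t, A t -> exists j, a j < t < b j) /\
    (forall m, sum_f_R0 (fun j => b j - a j) m <= eps).

Definition is_glb (E : R -> Prop) (l : R) : Prop :=
  (forall r, E r -> l <= r) /\ (forall l', (forall r, E r -> l' <= r) -> l' <= l).

Definition periodic (N : nat) (p : nat -> R) (v : Rn N -> R) : Prop :=
  forall i x, (i < N)%nat -> v (vadd N x (vscale N (p i) (vbasis N i))) = v x.

Definition Xp (N : nat) (p : nat -> R) (v : Rn N -> R) : Prop :=
  contRn N v /\ periodic N p v.

(* (K_{xi,mu} v)(x) = \int e^{-mu (y-x).xi} k(y-x) v(y) dy ; supp k in the ball of radius delta0,
   so the integral over R^N equals the integral over the cube x + [-delta0,delta0]^N *)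
Definition Kop (N : nat) (k : Rn N -> R) (delta0 : R) (xi : Rn N) (mu : R)
  (v : Rn N -> R) (x : Rn N) : R :=
  boxint N (fun y => exp (- mu * dot N (vsub N y x) xi) * k (vsub N y x) * v y) x delta0.

Definition Lop (N : nat) (k : Rn N -> R) (delta0 : R) (a0 : Rn N -> R) (xi : Rn N) (mu : R)
  (v : Rn N -> R) (x : Rn N) : R :=
  Kop N k delta0 xi mu v x - v x + a0 x * v x.

(* alpha + i beta is in the spectrum of L on the complex space X_p + i X_p:
   L - (alpha + i beta) is not bijective (by the open mapping theorem bijective
   bounded operators have bounded inverse). Complex functions are pairs (u1,u2). *)
Definition in_spec (N : nat) (p : nat -> R) (k : Rn N -> R) (delta0 : R)
  (a0 : Rn N -> R) (xi : Rn N) (mu : R) (alpha beta : R) : Prop :=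
  let L := Lop N k delta0 a0 xi mu in
  ~ ( (forall g1 g2, Xp N p g1 -> Xp N p g2 ->
         exists u1 u2, Xp N p u1 /\ Xp N p u2 /\
           (forall x, L u1 x - alpha * u1 x + beta * u2 x = g1 x) /\
           (forall x, L u2 x - alpha * u2 x - beta * u1 x = g2 x))
      /\
      (forall u1 u2, Xp N p u1 -> Xp N p u2 ->
           (forall x, L u1 x - alpha * u1 x + beta * u2 x = 0) ->
           (forall x, L u2 x - alpha * u2 x - beta * u1 x = 0) ->
           forall x, u1 x = 0 /\ u2 x = 0) ).

Definition lambda0 (N : nat) (p : nat -> R) (k : Rn N -> R) (delta0 : R)
  (a0 : Rn N -> R) (xi : Rn N) (mu : R) : R :=
  epsilon (inhabits 0) (fun l => is_lub (fun r => exists beta, in_spec N p k delta0 a0 xi mu r beta) l).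

Fixpoint iterL (N : nat) (k : Rn N -> R) (delta0 : R) (a0 : Rn N -> R) (xi : Rn N) (mu lam : R)
  (j : nat) (v : Rn N -> R) : Rn N -> R :=
  match j with
  | O => v
  | S j' => fun x => Lop N k delta0 a0 xi mu (iterL N k delta0 a0 xi mu lam j' v) x
                      - lam * iterL N k delta0 a0 xi mu lam j' v x
  end.

(* lam (real) is the principal eigenvalue of K_{xi,mu} - I + a0 I on X_p:
   an eigenvalue with an eigenfunction in X_p^+, algebraically simple
   (generalized eigenspace one-dimensional), and every other point of the
   spectrum has real part < lam. *)
Definition principal_eigenvalue (N : nat) (p : nat -> R) (k : Rn N -> R) (delta0 : R)
  (a0 : Rn N -> R) (xi : Rn N) (mu lam : R) : Prop :=
  exists psi : Rn N -> R,
    Xp N p psi /\ (forall x, 0 <= psi x) /\ (exists x, psi x <> 0) /\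
    (forall x, Lop N k delta0 a0 xi mu psi x = lam * psi x) /\
    (forall v j, Xp N p v -> (forall x, iterL N k delta0 a0 xi mu lam j v x = 0) ->
       exists a, forall x, v x = a * psi x) /\
    (forall alpha beta, in_spec N p k delta0 a0 xi mu alpha beta ->
       (alpha, beta) <> (lam, 0) -> alpha < lam).

Definition Ez_rhs (N : nat) (k : Rn N -> R) (delta0 : R) (f : Rn N -> R -> R) (z : Rn N)
  (w : R -> Rn N -> R) (t : R) (x : Rn N) : R :=
  boxint N (fun y => k (vsub N y x) * w t y) x delta0 - w t x
  + w t x * f (vadd N x z) (w t x).

Definition subsolution (N : nat) (k : Rn N -> R) (delta0 : R) (f : Rn N -> R -> R) (z : Rn N)
  (w : R -> Rn N -> R) : Prop :=
  forall x,
    continuity (fun t => w t x) /\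
    null_set (fun t => ~ exists l, derivable_pt_lim (fun s => w s x) t l) /\
    (forall t l, derivable_pt_lim (fun s => w s x) t l -> l <= Ez_rhs N k delta0 f z w t x).

Definition svar (N : nat) (xi : Rn N) (c T t : R) (x : Rn N) : R := dot N x xi + c * T - c * t.

Definition v1 (N : nat) (xi : Rn N) (c mu mu1 d1 : R) (phi phi1 : Rn N -> R)
  (z : Rn N) (T t : R) (x : Rn N) : R :=
  exp (- mu * svar N xi c T t x) * phi (vadd N x z)
  - d1 * exp (- mu1 * svar N xi c T t x) * phi1 (vadd N x z).

Definition ulow (N : nat) (xi : Rn N) (c mu mu1 d1 b M : R) (phi phi1 phi0 : Rn N -> R)
  (z : Rn N) (T t : R) (x : Rn N) : R :=
  if Rlt_dec (svar N xi c T t x) M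
  then Rmax (b * phi0 (vadd N x z)) (v1 N xi c mu mu1 d1 phi phi1 z T t x)
  else v1 N xi c mu mu1 d1 phi phi1 z T t x.

(* Write s = x.xi + cT - ct, V = v^1, a = b phi0(. + z), U = ulow.  Pointwise, V <= U,
   U = V where s >= M - 2 delta0 (there V >= b >= a, by the choice of M) and
   U = max(a, V) where s < M; since |xi| = 1, s moves by at most |y - x| in space.
   In time, U(., x) locally equals V, a or max(a, V): it is continuous, and
   differentiable off {V = a}, which has at most two points because
   V - a = e^(-mu s) (P - B e^((mu - mu1) s) - a e^(mu s)) and Rolle applies.
   Where U = V, d/dt U = d/dt V <= rhs(V) <= rhs(U) (choice of d1, monotone nonlocal
   term); elsewhere U = a is a local minimum, d/dt U = 0 <= rhs(a) <= rhs(U) (choice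
   of b).  Monotonicity of the box integral needs continuous integrands, whence the
   continuity of parametric integrals. *)

From Stdlib Require Import Reals Lra Lia Classical ClassicalEpsilon.
Open Scope R_scope.

(** * Euclidean structure of [Rn] *)

Lemma vsub_pair m a v b w : vsub (S m) (a, v) (b, w) = (a + -1 * b, vsub m v w).
Proof. reflexivity. Qed.

Lemma dot_nonneg n x : 0 <= dot n x x.
Proof.
 induction n as [|n IH]; simpl; [lra|].
 destruct x as [a v]; simpl. specialize (IH v). nra.
Qed.

Lemma vnorm_pair m a w : vnorm (S m) (a, w) = sqrt (a * a + dot m w w).
Proof. reflexivity. Qed.

Lemma vnorm_nonneg n x : 0 <= vnorm n x.
Proof. apply sqrt_pos. Qed.

Lemma vnorm_fst m a w : Rabs a <= vnorm (S m) (a, w).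
Proof.
 rewrite vnorm_pair, <- sqrt_Rsqr_abs. apply sqrt_le_1_alt.
 unfold Rsqr. pose proof (dot_nonneg m w). lra.
Qed.

Lemma vnorm_snd m a w : vnorm m w <= vnorm (S m) (a, w).
Proof. rewrite vnorm_pair. unfold vnorm. apply sqrt_le_1_alt. nra. Qed.

Lemma vnorm_pair_le m a w : vnorm (S m) (a, w) <= Rabs a + vnorm m w.
Proof.
 rewrite vnorm_pair. unfold vnorm.
 pose proof (dot_nonneg m w) as Hw. pose proof (sqrt_pos (dot m w w)).
 pose proof (Rabs_pos a).
 rewrite <- (sqrt_Rsqr (Rabs a + sqrt (dot m w w))) by lra.
 apply sqrt_le_1_alt. unfold Rsqr.
 assert (Rabs a * Rabs a = a * a) by (rewrite <- Rabs_mult; apply Rabs_right; nra).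
 pose proof (sqrt_sqrt _ Hw). nra.
Qed.

Lemma vnorm_pair0 m w : vnorm (S m) (0, w) = vnorm m w.
Proof. rewrite vnorm_pair. unfold vnorm. f_equal. ring. Qed.

Lemma vscale_zero n h : vscale n h (vzero n) = vzero n.
Proof. induction n; simpl; [reflexivity|]. rewrite IHn. f_equal. ring. Qed.

Lemma vadd_zero n v : vadd n v (vzero n) = v.
Proof.
 induction n; simpl; destruct v; [reflexivity|]. simpl. rewrite IHn. f_equal. ring.
Qed.

Lemma dot_zero n : dot n (vzero n) (vzero n) = 0.
Proof. induction n; simpl; [reflexivity|]. rewrite IHn. ring. Qed.

Lemma vnorm_self n v : vnorm n (vsub n v v) = 0.
Proof.
 assert (E : vsub n v v = vzero n).
 { unfold vsub. induction n; simpl; [reflexivity|]. destruct v; simpl.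
   rewrite IHn. f_equal. ring. }
 unfold vnorm. rewrite E, dot_zero. exact sqrt_0.
Qed.

Lemma vsub_trans n y z x : vsub n (vadd n y z) (vadd n x z) = vsub n y x.
Proof.
 unfold vsub. induction n; simpl; [reflexivity|].
 destruct y, z, x; simpl. rewrite IHn. f_equal. ring.
Qed.

Lemma vsub_sub n y x y0 : vsub n (vsub n y x) (vsub n y0 x) = vsub n y y0.
Proof.
 unfold vsub. induction n; simpl; [reflexivity|].
 destruct y, x, y0; simpl. rewrite IHn. f_equal. ring.
Qed.

Lemma dot_sub n y x w : dot n (vsub n y x) w = dot n y w - dot n x w.
Proof.
 unfold vsub. induction n; simpl; [ring|].
 destruct y, x, w; simpl. rewrite IHn. ring.
Qed.

Lemma dot_sq_le n u w : dot n u w * dot n u w <= dot n u u * dot n w w.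
Proof.
 induction n as [|n IH]; simpl; [lra|].
 destruct u as [a u], w as [b w]; simpl.
 specialize (IH u w). pose proof (dot_nonneg n u). pose proof (dot_nonneg n w).
 set (D := dot n u w) in *. set (X := dot n u u) in *. set (Y := dot n w w) in *.
 assert (Hcross : 2 * (a * b * D) <= a * a * Y + b * b * X).
 { assert (Hsq : (2 * (a * b * D)) * (2 * (a * b * D))
                 <= (a * a * Y + b * b * X) * (a * a * Y + b * b * X)).
   { assert (0 <= (a * a * Y - b * b * X) * (a * a * Y - b * b * X)) by apply Rle_0_sqr.
     assert (a * b * (a * b) * (D * D) <= a * b * (a * b) * (X * Y)) by
       (apply Rmult_le_compat_l; nra).
     nra. }
   assert (0 <= a * a * Y + b * b * X) by nra. nra. }
 nra.
Qed.

Lemma CS n u w : Rabs (dot n u w) <= vnorm n u * vnorm n w.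
Proof.
 unfold vnorm. rewrite <- sqrt_mult by apply dot_nonneg.
 rewrite <- sqrt_Rsqr_abs. apply sqrt_le_1_alt. apply dot_sq_le.
Qed.

(** * Continuity *)

Lemma cpt_eps g x : continuity_pt g x -> forall eps, 0 < eps ->
  exists d, 0 < d /\ forall y, Rabs (y - x) < d -> Rabs (g y - g x) < eps.
Proof.
 intros H eps He. destruct (H eps He) as [d [Hd H1]]. exists d; split; auto.
 intros y Hy. destruct (Req_dec y x) as [->|Hne].
 - unfold Rminus; rewrite Rplus_opp_r, Rabs_R0; auto.
 - apply (H1 y). split; [split; [exact I | auto] | exact Hy].
Qed.

Lemma eps_cpt g x : (forall eps, 0 < eps ->
  exists d, 0 < d /\ forall y, Rabs (y - x) < d -> Rabs (g y - g x) < eps) ->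
  continuity_pt g x.
Proof.
 intros H eps He. destruct (H eps He) as [d [Hd H1]]. exists d; split; auto.
 intros y [_ Hy]. exact (H1 y Hy).
Qed.

Definition contAt n (g : Rn n -> R) x := forall eps, 0 < eps -> exists delta, 0 < delta /\
    forall y, vnorm n (vsub n y x) < delta -> Rabs (g y - g x) < eps.

Lemma contRn_At n g : contRn n g <-> forall x, contAt n g x.
Proof. unfold contRn, contAt; tauto. Qed.

Definition cont2 (F : R -> R -> R) a b := forall eps, 0 < eps -> exists d, 0 < d /\
  forall u v, Rabs (u - a) < d -> Rabs (v - b) < d -> Rabs (F u v - F a b) < eps.

Lemma cont2_plus a b : cont2 Rplus a b.
Proof.
 intros eps He. exists (eps/2); split; [lra|]. intros u v H1 H2.
 replace (u + v - (a + b)) with ((u - a) + (v - b)) by ring.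
 pose proof (Rabs_triang (u-a) (v-b)). lra.
Qed.

Lemma cont2_minus a b : cont2 Rminus a b.
Proof.
 intros eps He. exists (eps/2); split; [lra|]. intros u v H1 H2.
 replace (u - v - (a - b)) with ((u - a) + - (v - b)) by ring.
 pose proof (Rabs_triang (u-a) (-(v-b))). rewrite Rabs_Ropp in *. lra.
Qed.

Lemma cont2_mult a b : cont2 Rmult a b.
Proof.
 intros eps He.
 set (K := Rabs a + Rabs b + 1).
 assert (HK : 0 < K) by (unfold K; pose proof (Rabs_pos a); pose proof (Rabs_pos b); lra).
 exists (Rmin 1 (eps / (2 * K))); split.
 { apply Rmin_glb_lt; [lra | apply Rdiv_lt_0_compat; lra]. }
 intros u v H1 H2. pose proof (Rmin_l 1 (eps/(2*K))). pose proof (Rmin_r 1 (eps/(2*K))).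
 set (d := Rmin 1 (eps / (2 * K))) in *.
 replace (u * v - a * b) with ((u - a) * v + a * (v - b)) by ring.
 eapply Rle_lt_trans; [apply Rabs_triang|]. rewrite !Rabs_mult.
 assert (Rabs v <= Rabs b + 1).
 { replace v with ((v - b) + b) by ring. pose proof (Rabs_triang (v-b) b). lra. }
 assert (d * K <= eps / 2).
 { replace (eps / 2) with (eps / (2 * K) * K) by (field; lra).
   apply Rmult_le_compat_r; lra. }
 pose proof (Rabs_pos (u-a)). pose proof (Rabs_pos (v-b)).
 pose proof (Rabs_pos a). pose proof (Rabs_pos v).
 assert (Rabs (u - a) * Rabs v <= d * (Rabs b + 1)) by (apply Rmult_le_compat; lra).
 assert (Rabs a * Rabs (v - b) <= Rabs a * d) by (apply Rmult_le_compat_l; lra).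
 unfold K in *. nra.
Qed.

Lemma cont2_max a b : cont2 Rmax a b.
Proof.
 intros eps He. exists eps; split; auto. intros u v H1 H2.
 apply Rabs_def2 in H1. apply Rabs_def2 in H2.
 unfold Rmax. destruct (Rle_dec u v), (Rle_dec a b); apply Rabs_def1; lra.
Qed.

Lemma contAt_F2 n g h F x : contAt n g x -> contAt n h x -> cont2 F (g x) (h x) ->
  contAt n (fun y => F (g y) (h y)) x.
Proof.
 intros Hg Hh HF eps He. destruct (HF eps He) as [d [Hd H1]].
 destruct (Hg d Hd) as [d1 [Hd1 H2]]. destruct (Hh d Hd) as [d2 [Hd2 H3]].
 exists (Rmin d1 d2); split; [apply Rmin_glb_lt; auto|].
 intros y Hy. pose proof (Rmin_l d1 d2). pose proof (Rmin_r d1 d2).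
 apply H1; [apply H2 | apply H3]; lra.
Qed.

Lemma contAt_plus n g h x : contAt n g x -> contAt n h x -> contAt n (fun y => g y + h y) x.
Proof. intros; apply (contAt_F2 n g h Rplus); auto; apply cont2_plus. Qed.

Lemma contAt_minus n g h x : contAt n g x -> contAt n h x -> contAt n (fun y => g y - h y) x.
Proof. intros; apply (contAt_F2 n g h Rminus); auto; apply cont2_minus. Qed.

Lemma contAt_mult n g h x : contAt n g x -> contAt n h x -> contAt n (fun y => g y * h y) x.
Proof. intros; apply (contAt_F2 n g h Rmult); auto; apply cont2_mult. Qed.

Lemma contAt_max n g h x :
  contAt n g x -> contAt n h x -> contAt n (fun y => Rmax (g y) (h y)) x.
Proof. intros; apply (contAt_F2 n g h Rmax); auto; apply cont2_max. Qed.

Lemma contAt_comp n (psi : R -> R) g x : continuity_pt psi (g x) -> contAt n g x ->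
  contAt n (fun y => psi (g y)) x.
Proof.
 intros Hp Hg eps He. destruct (cpt_eps _ _ Hp eps He) as [d [Hd H1]].
 destruct (Hg d Hd) as [d1 [Hd1 H2]]. exists d1; split; auto.
Qed.

Lemma contAt_const n r x : contAt n (fun _ => r) x.
Proof.
 intros eps He. exists 1; split; [lra|].
 intros. unfold Rminus; rewrite Rplus_opp_r, Rabs_R0; auto.
Qed.

Lemma contAt_dot n w x : contAt n (fun y => dot n y w) x.
Proof.
 intros eps He. pose proof (vnorm_nonneg n w).
 exists (eps / (vnorm n w + 1)). split; [apply Rdiv_lt_0_compat; lra|].
 intros y Hy. rewrite <- dot_sub. eapply Rle_lt_trans; [apply CS|].
 pose proof (vnorm_nonneg n (vsub n y x)).
 apply Rle_lt_trans with (eps / (vnorm n w + 1) * vnorm n w).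
 - apply Rmult_le_compat_r; lra.
 - apply Rlt_le_trans with (eps / (vnorm n w + 1) * (vnorm n w + 1)).
   + apply Rmult_lt_compat_l; [apply Rdiv_lt_0_compat|]; lra.
   + right; field; lra.
Qed.

Lemma contAt_transl n g z x : contAt n g (vadd n x z) -> contAt n (fun y => g (vadd n y z)) x.
Proof.
 intros H eps He. destruct (H eps He) as [d [Hd H1]]. exists d; split; auto.
 intros y Hy. apply H1. rewrite vsub_trans. auto.
Qed.

Lemma contAt_shift n g x0 x : contAt n g (vsub n x x0) -> contAt n (fun y => g (vsub n y x0)) x.
Proof.
 intros H eps He. destruct (H eps He) as [d [Hd H1]]. exists d; split; auto.
 intros y Hy. apply H1. rewrite vsub_sub. auto.
Qed.

Lemma contAt_local n g h x d : 0 < d ->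
  (forall y, vnorm n (vsub n y x) < d -> g y = h y) -> contAt n h x -> contAt n g x.
Proof.
 intros Hd Heq H eps He. destruct (H eps He) as [d1 [Hd1 H1]].
 exists (Rmin d d1); split; [apply Rmin_glb_lt; auto|].
 intros y Hy. pose proof (Rmin_l d d1). pose proof (Rmin_r d d1).
 rewrite (Heq y), (Heq x) by (rewrite ?vnorm_self; lra). apply H1; lra.
Qed.

Lemma contRn_section m (g : Rn (S m) -> R) y0 : contRn (S m) g -> contRn m (fun y => g (y0, y)).
Proof.
 intros Hg x eps He. destruct (Hg (y0, x) eps He) as [d [Hd H1]].
 exists d; split; auto. intros y Hy. apply H1. rewrite vsub_pair.
 replace (y0 + -1 * y0) with 0 by ring. rewrite vnorm_pair0. auto.
Qed.

Lemma contRn_fst_section q (H : Rn (S q) -> R) p y1 : contRn (S q) H ->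
  continuity_pt (fun y => H (y, p)) y1.
Proof.
 intros Hc. apply eps_cpt. intros eps He. destruct (Hc (y1, p) eps He) as [d [Hd H1]].
 exists d; split; auto. intros y Hy. apply H1. rewrite vsub_pair.
 eapply Rle_lt_trans; [apply vnorm_pair_le|]. rewrite vnorm_self.
 replace (y + -1 * y1) with (y - y1) by ring. lra.
Qed.

Lemma deriv_ext g h x l : (forall s, g s = h s) ->
  derivable_pt_lim g x l -> derivable_pt_lim h x l.
Proof.
 intros He H eps Hep. destruct (H eps Hep) as [d Hd]. exists d.
 intros u Hu Hu2. rewrite <- !He. apply Hd; auto.
Qed.

Lemma deriv_shift g s l : derivable_pt_lim (fun h => g (s + h)) 0 l -> derivable_pt_lim g s l.
Proof.
 intros H eps Hep. destruct (H eps Hep) as [d Hd]. exists d. intros h Hh Hh2.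
 specialize (Hd h Hh Hh2). rewrite Rplus_0_l, Rplus_0_r in Hd. auto.
Qed.

Lemma MVT_bound g g' a b B : (forall s, derivable_pt_lim g s (g' s)) ->
  (forall s, Rmin a b <= s <= Rmax a b -> Rabs (g' s) <= B) ->
  Rabs (g b - g a) <= B * Rabs (b - a).
Proof.
 intros Hd HB. destruct (Rtotal_order a b) as [Hab|[Hab|Hab]].
 - destruct (MVT_cor2 g g' a b Hab (fun c _ => Hd c)) as [c [Hc1 Hc2]].
   rewrite Hc1, Rabs_mult. apply Rmult_le_compat_r; [apply Rabs_pos|].
   apply HB. rewrite Rmin_left, Rmax_right by lra. lra.
 - subst. unfold Rminus; rewrite !Rplus_opp_r, !Rabs_R0. lra.
 - destruct (MVT_cor2 g g' b a Hab (fun c _ => Hd c)) as [c [Hc1 Hc2]].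
   rewrite <- Rabs_Ropp, <- (Rabs_Ropp (b - a)).
   replace (- (g b - g a)) with (g a - g b) by ring. replace (- (b - a)) with (a - b) by ring.
   rewrite Hc1, Rabs_mult. apply Rmult_le_compat_r; [apply Rabs_pos|].
   apply HB. rewrite Rmin_right, Rmax_left by lra. lra.
Qed.

Lemma first_coord_lipschitz m (g dg0 : Rn (S m) -> R) a0 v0 :
  contAt (S m) dg0 (a0, v0) ->
  (forall s (v : Rn m), derivable_pt_lim (fun r => g (r, v)) s (dg0 (s, v))) ->
  exists d B, 0 < d /\ 0 < B /\ forall a (v : Rn m),
    vnorm (S m) (vsub (S m) (a, v) (a0, v0)) < d -> Rabs (g (a, v) - g (a0, v)) <= B * Rabs (a - a0).
Proof.
 intros Hc Hd. destruct (Hc 1 ltac:(lra)) as [d [Hd0 Hnear]].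
 exists d, (Rabs (dg0 (a0, v0)) + 1). split; [exact Hd0|]. split; [pose proof (Rabs_pos (dg0 (a0, v0))); lra|].
 intros a v Hav. apply (MVT_bound (fun s => g (s, v)) (fun s => dg0 (s, v))); [exact (fun s => Hd s v)|].
 intros s Hs. pose proof (Rabs_triang_inv (dg0 (s, v)) (dg0 (a0, v0))).
 assert (Rabs (dg0 (s, v) - dg0 (a0, v0)) < 1); [|lra].
 apply Hnear. rewrite vsub_pair in Hav |- *.
 apply Rle_lt_trans with (vnorm (S m) (a + -1 * a0, vsub m v v0)); [|exact Hav].
 rewrite !vnorm_pair. apply sqrt_le_1_alt.
 assert ((s + -1 * a0) * (s + -1 * a0) <= (a + -1 * a0) * (a + -1 * a0)).
 { unfold Rmin, Rmax in Hs. destruct (Rle_dec a0 a); nra. }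
 lra.
Qed.

(* Induction on the dimension: continuity in the last coordinates by induction,
   and in the first coordinate by the Lipschitz bound above. *)
Lemma C1_cont n : forall (g : Rn n -> R) (dg : nat -> Rn n -> R),
  (forall i, (i < n)%nat -> contRn n (dg i)) ->
  (forall i x, (i < n)%nat ->
       derivable_pt_lim (fun s => g (vadd n x (vscale n s (vbasis n i)))) 0 (dg i x)) ->
  contRn n g.
Proof.
 induction n as [|m IH]; intros g dg Hc Hd.
 - intros [] eps He. exists 1; split; [lra|]. intros [] _.
   unfold Rminus; rewrite Rplus_opp_r, Rabs_R0; auto.
 - intros [a0 v0] eps He.
   assert (Hlast : contRn m (fun v => g (a0, v))).
   { apply (IH _ (fun j v => dg (S j) (a0, v))).
     - intros j Hj. apply contRn_section, Hc. lia.
     - intros j x Hj. specialize (Hd (S j) (a0, x) ltac:(lia)). simpl in Hd.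
       eapply deriv_ext; [|exact Hd]. intros s. simpl. rewrite Rmult_0_r, Rplus_0_r. reflexivity. }
   assert (Hfirst : forall s (v : Rn m), derivable_pt_lim (fun r => g (r, v)) s (dg 0%nat (s, v))).
   { intros s v. apply deriv_shift. specialize (Hd 0%nat (s, v) ltac:(lia)). simpl in Hd.
     eapply deriv_ext; [|exact Hd]. intros h. simpl.
     rewrite vscale_zero, vadd_zero, Rmult_1_r. reflexivity. }
   destruct (first_coord_lipschitz m g (dg 0%nat) a0 v0 (Hc 0%nat ltac:(lia) (a0, v0)) Hfirst)
     as [d2 [B [Hd2 [HB Hlip]]]].
   destruct (Hlast v0 (eps/2) ltac:(lra)) as [d1 [Hd1 H1]].
   set (dd := Rmin (Rmin d1 d2) (eps / (2 * B))).
   assert (Hdd1 : dd <= d1) by (unfold dd; eapply Rle_trans; [apply Rmin_l | apply Rmin_l]).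
   assert (Hdd2 : dd <= d2) by (unfold dd; eapply Rle_trans; [apply Rmin_l | apply Rmin_r]).
   assert (Hdd3 : dd <= eps / (2 * B)) by apply Rmin_r.
   exists dd. split; [unfold dd; repeat apply Rmin_glb_lt; auto; apply Rdiv_lt_0_compat; lra|].
   intros [a v] Hy. clearbody dd.
   pose proof (Hlip a v (Rlt_le_trans _ _ _ Hy Hdd2)) as Hg1.
   rewrite vsub_pair in Hy.
   pose proof (vnorm_fst m (a + -1 * a0) (vsub m v v0)) as Hf.
   pose proof (vnorm_snd m (a + -1 * a0) (vsub m v v0)) as Hs.
   assert (Hg2 : Rabs (g (a0, v) - g (a0, v0)) < eps / 2) by (apply H1; lra).
   assert (B * Rabs (a - a0) <= eps / 2).
   { replace (a - a0) with (a + -1 * a0) by ring.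
     apply Rle_trans with (B * (eps / (2 * B))); [apply Rmult_le_compat_l; [lra|]|].
     - left. eapply Rle_lt_trans; [exact Hf|]. eapply Rlt_le_trans; [exact Hy | exact Hdd3].
     - right; field; lra. }
   replace (g (a, v) - g (a0, v0)) with ((g (a, v) - g (a0, v)) + (g (a0, v) - g (a0, v0))) by ring.
   eapply Rle_lt_trans; [apply Rabs_triang|]. lra.
Qed.

(** * Parametric integrals and monotonicity of [boxint] *)

Lemma RInt_eq g a b (pr : Riemann_integrable g a b) : RInt g a b = RiemannInt pr.
Proof.
 unfold RInt. destruct (excluded_middle_informative _) as [Hi|Hn].
 - apply RiemannInt_P5.
 - exfalso. apply Hn. constructor. exact pr.
Qed.

Lemma tube_local q (H : Rn (S q) -> R) p0 eps x0 : contRn (S q) H -> 0 < eps ->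
  exists d, 0 < d /\ forall y1 p, Rabs (y1 - x0) < d -> vnorm q (vsub q p p0) < d ->
    Rabs (H (y1, p) - H (y1, p0)) < eps.
Proof.
 intros Hc He. destruct (Hc (x0, p0) (eps/2) ltac:(lra)) as [d [Hd H1]].
 exists (d/2); split; [lra|]. intros y1 p Hy Hp.
 assert (A1 : Rabs (H (y1, p) - H (x0, p0)) < eps/2).
 { apply H1. rewrite vsub_pair. eapply Rle_lt_trans; [apply vnorm_pair_le|].
   replace (y1 + -1 * x0) with (y1 - x0) by ring. lra. }
 assert (A2 : Rabs (H (y1, p0) - H (x0, p0)) < eps/2).
 { apply H1. rewrite vsub_pair. eapply Rle_lt_trans; [apply vnorm_pair_le|].
   rewrite vnorm_self. replace (y1 + -1 * x0) with (y1 - x0) by ring. lra. }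
 replace (H (y1, p) - H (y1, p0)) with ((H (y1, p) - H (x0, p0)) + - (H (y1, p0) - H (x0, p0))) by ring.
 eapply Rle_lt_trans; [apply Rabs_triang|]. rewrite Rabs_Ropp. lra.
Qed.

(* Tube lemma over a compact segment [a, b], by a supremum argument on the
   set of right endpoints x for which a uniform d exists on [a, x]. *)
Lemma tube q (H : Rn (S q) -> R) a b p0 eps : contRn (S q) H -> a <= b -> 0 < eps ->
  exists d, 0 < d /\ forall y1 p, a <= y1 <= b -> vnorm q (vsub q p p0) < d ->
    Rabs (H (y1, p) - H (y1, p0)) < eps.
Proof.
 intros Hc Hab He.
 set (P := fun x => exists d, 0 < d /\ forall y1 p, a <= y1 <= x -> vnorm q (vsub q p p0) < d ->
    Rabs (H (y1, p) - H (y1, p0)) < eps).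
 set (E := fun x => a <= x <= b /\ P x).
 assert (Ea : E a).
 { split; [lra|]. destruct (tube_local q H p0 eps a Hc He) as [d [Hd H1]].
   exists d; split; auto. intros y1 p Hy Hp. apply H1; auto.
   replace (y1 - a) with 0 by lra. rewrite Rabs_R0; auto. }
 assert (Hbnd : bound E) by (exists b; intros x [Hx _]; lra).
 destruct (completeness E Hbnd (ex_intro _ a Ea)) as [s [Hs1 Hs2]].
 assert (Has : a <= s) by (apply Hs1; auto).
 assert (Hsb : s <= b) by (apply Hs2; intros x [Hx _]; lra).
 destruct (tube_local q H p0 eps s Hc He) as [ds [Hds H1]].
 assert (Hx : exists x, E x /\ s - ds < x).
 { apply NNPP. intro Hn. assert (s <= s - ds); [|lra].
   apply Hs2. intros x Ex. apply Rnot_lt_le. intro Hlt. apply Hn. exists x; auto. }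
 destruct Hx as [x [[Hx1 [dx [Hdx H2]]] Hx2]].
 assert (Hx3 : x <= s) by (apply Hs1; split; auto; exists dx; auto).
 set (x' := Rmin (s + ds/2) b).
 assert (Ex' : E x').
 { split; [split; [unfold x'; apply Rmin_glb; lra | unfold x'; apply Rmin_r]|].
   exists (Rmin dx ds); split; [apply Rmin_glb_lt; auto|].
   intros y1 p Hy Hp. pose proof (Rmin_l dx ds). pose proof (Rmin_r dx ds).
   destruct (Rle_dec y1 x) as [Hyx|Hyx].
   - apply H2; lra.
   - assert (Hm : x' <= s + ds/2) by (unfold x'; apply Rmin_l).
     apply H1; [apply Rabs_def1|]; lra. }
 assert (Hx'b : x' = b).
 { assert (x' <= s) by (apply Hs1; auto). unfold x' in *.
   unfold Rmin in *. destruct (Rle_dec (s + ds/2) b); lra. }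
 rewrite Hx'b in Ex'. destruct Ex' as [_ [d [Hd H3]]]. exists d; split; auto.
Qed.

Lemma param_int q (H : Rn (S q) -> R) a b : contRn (S q) H -> a <= b ->
  contRn q (fun p => RInt (fun y1 => H (y1, p)) a b).
Proof.
 intros Hc Hab p0 eps He.
 set (e' := eps / (b - a + 1)).
 assert (He' : 0 < e') by (unfold e'; apply Rdiv_lt_0_compat; lra).
 destruct (tube q H a b p0 e' Hc Hab He') as [d [Hd H1]].
 exists d; split; auto. intros p Hp.
 assert (I1 : Riemann_integrable (fun y1 => H (y1, p)) a b).
 { apply continuity_implies_RiemannInt; auto. intros; apply contRn_fst_section; auto. }
 assert (I0 : Riemann_integrable (fun y1 => H (y1, p0)) a b).
 { apply continuity_implies_RiemannInt; auto. intros; apply contRn_fst_section; auto. }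
 pose proof (RiemannInt_P10 (-1) I1 I0) as I2.
 rewrite (RInt_eq _ _ _ I1), (RInt_eq _ _ _ I0).
 pose proof (RiemannInt_P13 I1 I0 I2) as E.
 destruct (@RiemannInt_const_bound _ _ _ (-e') e' I2 Hab) as [B1 B2].
 { intros x Hx. specialize (H1 x p ltac:(lra) Hp). apply Rabs_def2 in H1. lra. }
 assert (e' * (b - a) < eps).
 { apply Rlt_le_trans with (e' * (b - a + 1)); [apply Rmult_lt_compat_l; lra|].
   unfold e'. right; field; lra. }
 apply Rabs_def1; lra.
Qed.

Definition jcont q m (g : Rn q -> Rn m -> R) := forall p0 y0 eps, 0 < eps ->
  exists d, 0 < d /\ forall p y, vnorm q (vsub q p p0) < d -> vnorm m (vsub m y y0) < d ->
    Rabs (g p y - g p0 y0) < eps.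

(* The iterated box integral of a jointly continuous family depends continuously
   on the parameter (induction on the dimension, moving one integration variable
   into the parameter at each step). *)
Lemma boxint_param_cont m : forall q (g : Rn q -> Rn m -> R) c r, 0 <= r -> jcont q m g ->
  contRn q (fun p => boxint m (g p) c r).
Proof.
 induction m as [|m IH]; intros q g c r Hr Hj.
 - intros p0 eps He. destruct (Hj p0 tt eps He) as [d [Hd H1]]. exists d; split; auto.
   intros p Hp. simpl. apply H1; auto. unfold vnorm; simpl. rewrite sqrt_0. auto.
 - set (g' := fun (pp : Rn (S q)) (y : Rn m) => g (snd pp) (fst pp, y)).
   assert (Hj' : jcont (S q) m g').
   { intros [y1 p0] y0 eps He. destruct (Hj p0 (y1, y0) eps He) as [d [Hd H1]].
     exists (d/2); split; [lra|]. intros [y1' p] y Hp Hy. unfold g'; simpl.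
     rewrite vsub_pair in Hp.
     assert (Ha : Rabs (y1' + -1 * y1) < d/2) by (eapply Rle_lt_trans; [apply vnorm_fst|exact Hp]).
     assert (Hb : vnorm q (vsub q p p0) < d/2) by (eapply Rle_lt_trans; [apply vnorm_snd|exact Hp]).
     apply H1; [lra|]. rewrite vsub_pair. eapply Rle_lt_trans; [apply vnorm_pair_le|]. lra. }
   exact (param_int q _ (fst c - r) (fst c + r) (IH (S q) g' (snd c) r Hr Hj') ltac:(lra)).
Qed.

(* The inner integral of a continuous function, as a function of the first
   coordinate, is continuous; hence the outer integral is a genuine Riemann integral. *)
Lemma boxint_inner_cont m (g : Rn (S m) -> R) c r x : 0 <= r -> contRn (S m) g ->
  continuity_pt (fun y0 => boxint m (fun y => g (y0, y)) c r) x.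
Proof.
 intros Hr Hg.
 set (gq := fun (p : Rn 1) (y : Rn m) => g (fst p, y)).
 assert (Hj : jcont 1 m gq).
 { intros [p0 []] y0 eps He. destruct (Hg (p0, y0) eps He) as [d [Hd H1]].
   exists (d/2); split; [lra|]. intros [p []] y Hp Hy. unfold gq; simpl.
   apply H1. rewrite vsub_pair. eapply Rle_lt_trans; [apply vnorm_pair_le|].
   rewrite vsub_pair in Hp.
   assert (Rabs (p + -1 * p0) < d/2) by (eapply Rle_lt_trans; [apply vnorm_fst|exact Hp]).
   lra. }
 pose proof (boxint_param_cont m 1 gq c r Hr Hj) as Hc.
 apply eps_cpt. intros eps He. destruct (Hc (x, tt) eps He) as [d [Hd H1]].
 exists d; split; auto. intros y Hy. apply (H1 (y, tt)). rewrite vsub_pair.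
 unfold vnorm. simpl. rewrite Rplus_0_r. rewrite <- sqrt_Rsqr_abs in Hy. unfold Rsqr in Hy.
 replace (y + -1 * x) with (y - x) by ring. auto.
Qed.

Lemma boxint_mono m : forall (g h : Rn m -> R) c r, 0 <= r -> contRn m g -> contRn m h ->
  (forall y, g y <= h y) -> boxint m g c r <= boxint m h c r.
Proof.
 induction m as [|m IH]; intros g h c r Hr Hg Hh Hle; simpl; [apply Hle|].
 assert (I1 : Riemann_integrable (fun y0 => boxint m (fun y => g (y0, y)) (snd c) r)
                (fst c - r) (fst c + r))
   by (apply continuity_implies_RiemannInt; [lra | intros; apply boxint_inner_cont; auto]).
 assert (I2 : Riemann_integrable (fun y0 => boxint m (fun y => h (y0, y)) (snd c) r)
                (fst c - r) (fst c + r))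
   by (apply continuity_implies_RiemannInt; [lra | intros; apply boxint_inner_cont; auto]).
 rewrite (RInt_eq _ _ _ I1), (RInt_eq _ _ _ I2).
 apply RiemannInt_P19; [lra|]. intros x _.
 apply IH; auto; apply contRn_section; auto.
Qed.

(** * Functions of one variable: local equality and local minima *)

Lemma deriv_local g h t l : (exists d, 0 < d /\ forall s, Rabs (s - t) < d -> g s = h s) ->
  derivable_pt_lim h t l -> derivable_pt_lim g t l.
Proof.
 intros [d [Hd He]] H eps Hep. destruct (H eps Hep) as [d1 Hd1].
 assert (Hm : 0 < Rmin d (pos d1)) by (apply Rmin_glb_lt; auto; apply cond_pos).
 exists (mkposreal _ Hm). intros u Hu Hu2. simpl in Hu2.
 pose proof (Rmin_l d d1). pose proof (Rmin_r d d1).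
 rewrite !He; [apply Hd1; auto; lra | | ].
 - replace (t - t) with 0 by ring. rewrite Rabs_R0; auto.
 - replace (t + u - t) with u by ring. lra.
Qed.

Lemma cpt_local g h t : (exists d, 0 < d /\ forall s, Rabs (s - t) < d -> g s = h s) ->
  continuity_pt h t -> continuity_pt g t.
Proof.
 intros [d [Hd He]] H. apply eps_cpt. intros eps Hep.
 destruct (cpt_eps _ _ H eps Hep) as [d1 [Hd1 H1]].
 exists (Rmin d d1); split; [apply Rmin_glb_lt; auto|]. intros y Hy.
 pose proof (Rmin_l d d1). pose proof (Rmin_r d d1).
 rewrite !He; [apply H1; lra | | lra].
 replace (t - t) with 0 by ring. rewrite Rabs_R0; auto.
Qed.

(* If g <= h near t with equality at t, then t is a local minimum of h - g, so
   the two derivatives at t coincide. *)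
Lemma deriv_touching g h t lg lh : derivable_pt_lim g t lg -> derivable_pt_lim h t lh ->
  g t = h t -> (exists d, 0 < d /\ forall s, Rabs (s - t) < d -> g s <= h s) -> lh = lg.
Proof.
 intros Hg Hh Heq [d [Hd Hle]].
 pose proof (derivable_pt_lim_minus h g t lh lg Hh Hg) as H.
 (* a nonzero derivative of h - g would make it negative on one side of t *)
 destruct (Rtotal_order (lh - lg) 0) as [Hlt|[Hz|Hgt]]; [exfalso | lra | exfalso].
 - destruct (H (- (lh - lg)) ltac:(lra)) as [d1 Hd1].
   set (u := Rmin (d/2) (d1/2)).
   assert (Hu : 0 < u) by (unfold u; apply Rmin_glb_lt; [lra | pose proof (cond_pos d1); lra]).
   assert (Hu1 : u <= d/2) by apply Rmin_l. assert (Hu2 : u <= d1/2) by apply Rmin_r.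
   specialize (Hd1 u ltac:(lra)). rewrite Rabs_right in Hd1 by lra.
   specialize (Hd1 ltac:(lra)). unfold minus_fct in Hd1.
   specialize (Hle (t + u)). rewrite Rabs_right in Hle by lra. specialize (Hle ltac:(lra)).
   assert (0 <= (h (t + u) - g (t + u) - (h t - g t)) / u)
     by (apply Rle_mult_inv_pos; lra).
   apply Rabs_def2 in Hd1. lra.
 - destruct (H (lh - lg) ltac:(lra)) as [d1 Hd1].
   set (u := Rmin (d/2) (d1/2)).
   assert (Hu : 0 < u) by (unfold u; apply Rmin_glb_lt; [lra | pose proof (cond_pos d1); lra]).
   assert (Hu1 : u <= d/2) by apply Rmin_l. assert (Hu2 : u <= d1/2) by apply Rmin_r.
   specialize (Hd1 (- u) ltac:(lra)). rewrite Rabs_left in Hd1 by lra.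
   specialize (Hd1 ltac:(lra)). unfold minus_fct in Hd1.
   specialize (Hle (t + - u)). rewrite Rabs_left in Hle by lra. specialize (Hle ltac:(lra)).
   assert ((h (t + - u) - g (t + - u) - (h t - g t)) / - u <= 0).
   { unfold Rdiv. rewrite Rinv_opp.
     assert (0 <= (h (t + - u) - g (t + - u) - (h t - g t)) * / u)
       by (apply Rle_mult_inv_pos; lra).
     lra. }
   apply Rabs_def2 in Hd1. lra.
Qed.

Lemma cpt_F2 g h F t : continuity_pt g t -> continuity_pt h t -> cont2 F (g t) (h t) ->
  continuity_pt (fun s => F (g s) (h s)) t.
Proof.
 intros Hg Hh HF. apply eps_cpt. intros eps He. destruct (HF eps He) as [d [Hd H1]].
 destruct (cpt_eps _ _ Hg d Hd) as [d1 [Hd1 H2]]. destruct (cpt_eps _ _ Hh d Hd) as [d2 [Hd2 H3]].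
 exists (Rmin d1 d2); split; [apply Rmin_glb_lt; auto|].
 intros y Hy. pose proof (Rmin_l d1 d2). pose proof (Rmin_r d1 d2).
 apply H1; [apply H2 | apply H3]; lra.
Qed.

Lemma near_lt g t K : continuity_pt g t -> g t < K ->
  exists d, 0 < d /\ forall s, Rabs (s - t) < d -> g s < K.
Proof.
 intros H HK. destruct (cpt_eps _ _ H (K - g t) ltac:(lra)) as [d [Hd H1]].
 exists d; split; auto. intros s Hs. specialize (H1 s Hs). apply Rabs_def2 in H1. lra.
Qed.

Lemma near_gt g t K : continuity_pt g t -> K < g t ->
  exists d, 0 < d /\ forall s, Rabs (s - t) < d -> K < g s.
Proof.
 intros H HK. destruct (cpt_eps _ _ H (g t - K) ltac:(lra)) as [d [Hd H1]].
 exists d; split; auto. intros s Hs. specialize (H1 s Hs). apply Rabs_def2 in H1. lra.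
Qed.

(** * Counting zeros, and null sets *)

Lemma rolle_two_zeros (g g' : R -> R) :
  (forall u, derivable_pt_lim g u (g' u)) ->
  (forall u v, g' u = 0 -> g' v = 0 -> u = v) ->
  forall u1 u2 u3, g u1 = 0 -> g u2 = 0 -> g u3 = 0 -> u1 = u2 \/ u1 = u3 \/ u2 = u3.
Proof.
 intros Hd Huniq.
 assert (Key : forall x y w, x < y < w -> g x = 0 -> g y = 0 -> g w = 0 -> False).
 { intros x y w [Hxy Hyw] Hx Hy Hw.
   destruct (MVT_cor2 g g' x y Hxy (fun c _ => Hd c)) as [p1 [E1 P1]].
   destruct (MVT_cor2 g g' y w Hyw (fun c _ => Hd c)) as [p2 [E2 P2]].
   rewrite Hx, Hy in E1. rewrite Hy, Hw in E2.
   assert (g' p1 = 0) by (apply (Rmult_eq_reg_r (y - x)); lra).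
   assert (g' p2 = 0) by (apply (Rmult_eq_reg_r (w - y)); lra).
   pose proof (Huniq p1 p2 ltac:(assumption) ltac:(assumption)). lra. }
 intros u1 u2 u3 H1 H2 H3.
 destruct (Rtotal_order u1 u2) as [a12|[a12|a12]]; auto;
 destruct (Rtotal_order u1 u3) as [a13|[a13|a13]]; auto;
 destruct (Rtotal_order u2 u3) as [a23|[a23|a23]]; auto; exfalso;
 first [ lra
       | apply (Key u1 u2 u3); auto; lra | apply (Key u1 u3 u2); auto; lra
       | apply (Key u2 u1 u3); auto; lra | apply (Key u2 u3 u1); auto; lra
       | apply (Key u3 u1 u2); auto; lra | apply (Key u3 u2 u1); auto; lra ].
Qed.

Definition expsum (P B a e m u : R) : R := P - B * exp (e * u) - a * exp (m * u).

Definition expsum' (B a e m u : R) : R := - (B * e * exp (e * u)) - a * m * exp (m * u).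

Lemma derivable_exp_lin e u : derivable_pt_lim (fun u => exp (e * u)) u (e * exp (e * u)).
Proof.
 replace (e * exp (e * u)) with (exp (e * u) * (e * 1)) by ring.
 apply (derivable_pt_lim_comp (fun u => e * u) exp).
 - exact (derivable_pt_lim_scal id e u 1 (derivable_pt_lim_id u)).
 - apply derivable_pt_lim_exp.
Qed.

Lemma expsum_deriv P B a e m u : derivable_pt_lim (expsum P B a e m) u (expsum' B a e m u).
Proof.
 unfold expsum, expsum'.
 replace (- (B * e * exp (e * u)) - a * m * exp (m * u))
   with (0 - B * (e * exp (e * u)) - a * (m * exp (m * u))) by ring.
 apply (derivable_pt_lim_minus (fun u => P - B * exp (e * u)) (fun u => a * exp (m * u))).
 - apply (derivable_pt_lim_minus (fun _ => P) (fun u => B * exp (e * u))).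
   + apply derivable_pt_lim_const.
   + exact (derivable_pt_lim_scal _ B u _ (derivable_exp_lin e u)).
 - exact (derivable_pt_lim_scal _ a u _ (derivable_exp_lin m u)).
Qed.

(* With distinct exponents, the derivative vanishes at most once:
   B e e^(e u) = - a m e^(m u) forces e^((m - e) u) = - B e / (a m). *)
Lemma expsum'_zero_unique B a e m u1 u2 : a <> 0 -> m <> 0 -> e <> m ->
  expsum' B a e m u1 = 0 -> expsum' B a e m u2 = 0 -> u1 = u2.
Proof.
 unfold expsum'. intros Ha Hm He K1 K2.
 pose proof (exp_pos (m * u1)). pose proof (exp_pos (m * u2)).
 assert (HBe : B * e <> 0).
 { intro HB. rewrite HB in K1.
   assert (a * m * exp (m * u1) <> 0) by
     (apply Rmult_integral_contrapositive_currified;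
      [apply Rmult_integral_contrapositive_currified|]; lra).
   lra. }
 assert (E : exp (e * u1) * exp (m * u2) = exp (e * u2) * exp (m * u1)).
 { apply (Rmult_eq_reg_l (B * e)); auto.
   replace (B * e * (exp (e * u1) * exp (m * u2))) with ((B * e * exp (e * u1)) * exp (m * u2)) by ring.
   replace (B * e * (exp (e * u2) * exp (m * u1))) with ((B * e * exp (e * u2)) * exp (m * u1)) by ring.
   replace (B * e * exp (e * u1)) with (- (a * m * exp (m * u1))) by lra.
   replace (B * e * exp (e * u2)) with (- (a * m * exp (m * u2))) by lra. ring. }
 rewrite <- !exp_plus in E. apply exp_inv in E.
 assert (Q : (m - e) * (u2 - u1) = 0) by lra.
 apply Rmult_integral in Q. destruct Q as [Q|Q]; lra.
Qed.

Lemma expsum_three_zeros P B a e m u1 u2 u3 : a <> 0 -> m <> 0 -> e <> m ->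
  expsum P B a e m u1 = 0 -> expsum P B a e m u2 = 0 -> expsum P B a e m u3 = 0 ->
  u1 = u2 \/ u1 = u3 \/ u2 = u3.
Proof.
 intros Ha Hm He. apply (rolle_two_zeros _ (expsum' B a e m)).
 - apply expsum_deriv.
 - intros u v. apply expsum'_zero_unique; auto.
Qed.

Lemma at_most_two_points (Z : R -> Prop) :
  (forall r1 r2 r3, Z r1 -> Z r2 -> Z r3 -> r1 = r2 \/ r1 = r3 \/ r2 = r3) ->
  exists t1 t2, forall t, Z t -> t = t1 \/ t = t2.
Proof.
 intros H. destruct (classic (exists t, Z t)) as [[t1 Ht1]|Hn].
 - destruct (classic (exists t, Z t /\ t <> t1)) as [[t2 [Ht2 Hne]]|Hn2].
   + exists t1, t2. intros t Ht. destruct (H t1 t2 t Ht1 Ht2 Ht) as [E|[E|E]]; auto.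
     congruence.
   + exists t1, t1. intros t Ht. left. apply NNPP. intro. apply Hn2. exists t; auto.
 - exists 0, 0. intros t Ht. exfalso. apply Hn. exists t; auto.
Qed.

(* A subset of a two-point set is null: cover it by two intervals of length eps/2. *)
Lemma null_two (A : R -> Prop) t1 t2 : (forall t, A t -> t = t1 \/ t = t2) -> null_set A.
Proof.
 intros H eps He.
 exists (fun j => match j with O => t1 - eps/4 | 1%nat => t2 - eps/4 | _ => 0 end).
 exists (fun j => match j with O => t1 + eps/4 | 1%nat => t2 + eps/4 | _ => 0 end).
 split; [|split].
 - intros [|[|j]]; lra.
 - intros t Ht. destruct (H t Ht) as [->| ->]; [exists 0%nat | exists 1%nat]; lra.
 - intros [|[|m]]; simpl; [lra | lra |].
   induction m as [|m IH]; simpl in *; lra.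
Qed.

(** * The glued function is a sub-solution *)

Section Gluing.

Variables (N : nat) (k : Rn N -> R) (delta0 : R) (f : Rn N -> R -> R).
Variables (xi z : Rn N) (c mu mu1 d1 b M T : R) (phi phi1 phi0 : Rn N -> R).

Local Notation sv := (svar N xi c T).
Local Notation V := (v1 N xi c mu mu1 d1 phi phi1 z T).
Local Notation U := (ulow N xi c mu mu1 d1 b M phi phi1 phi0 z T).
Local Notation bphi0 y := (b * phi0 (vadd N y z)).

Hypothesis Hdelta0 : 0 < delta0.
Hypothesis Hkc : contRn N k.
Hypothesis Hk_nonneg : forall w, 0 <= k w.
Hypothesis Hk_zero : forall w, delta0 <= vnorm N w -> k w = 0.
Hypothesis Hxi : dot N xi xi = 1.
Hypothesis Hphic : contRn N phi.
Hypothesis Hphi1c : contRn N phi1.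
Hypothesis Hphi0c : contRn N phi0.
Hypothesis Hmu : 0 < mu.
Hypothesis Hmu1 : mu < mu1.
Hypothesis Hb : 0 < b.
Hypothesis Hphi0pos : forall y, 0 < phi0 y.
Hypothesis Hphi0le : forall y, phi0 y <= 1.
(* v^1 is a sub-solution (choice of d1) *)
Hypothesis HV_sub : forall t x l,
  derivable_pt_lim (fun r => V r x) t l -> l <= Ez_rhs N k delta0 f z V t x.
(* b phi0(. + z) is a sub-solution (choice of b) *)
Hypothesis Hb_sub : forall x,
  0 <= boxint N (fun y => k (vsub N y x) * bphi0 y) x delta0
       - bphi0 x + f (vadd N x z) (bphi0 x) * bphi0 x.
(* v^1 >= b on the gluing strip (choice of M) *)
Hypothesis HM_b : forall t x, M - 2 * delta0 <= sv t x <= M -> b <= V t x.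

Lemma svar_lipschitz t y x : Rabs (sv t y - sv t x) <= vnorm N (vsub N y x).
Proof.
 unfold svar. replace (dot N y xi + c * T - c * t - (dot N x xi + c * T - c * t))
   with (dot N (vsub N y x) xi) by (rewrite dot_sub; ring).
 eapply Rle_trans; [apply CS|]. unfold vnorm at 2. rewrite Hxi, sqrt_1. lra.
Qed.

Lemma svar_close t y x d : vnorm N (vsub N y x) < d -> sv t x - d < sv t y < sv t x + d.
Proof.
 intros Hd. pose proof (svar_lipschitz t y x) as Hl.
 assert (Hl' : Rabs (sv t y - sv t x) < d) by lra. apply Rabs_def2 in Hl'. lra.
Qed.

Lemma ulow_far t y : M - 2 * delta0 <= sv t y -> U t y = V t y.
Proof.
 intros Hs. unfold ulow. destruct (Rlt_dec _ M) as [h|h]; [|reflexivity].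
 apply Rmax_right. pose proof (Hphi0le (vadd N y z)).
 apply Rle_trans with b; [nra | apply HM_b; lra].
Qed.

Lemma V_le_ulow t y : V t y <= U t y.
Proof. unfold ulow. destruct (Rlt_dec _ M); [apply Rmax_r | lra]. Qed.

Lemma ulow_near t y : sv t y < M -> U t y = Rmax (bphi0 y) (V t y).
Proof. intros Hs. unfold ulow. destruct (Rlt_dec _ M); [reflexivity | contradiction]. Qed.

Lemma bphi0_le_ulow t y : sv t y < M -> bphi0 y <= U t y.
Proof. intros Hs. rewrite ulow_near by exact Hs. apply Rmax_l. Qed.

Lemma svar_space_cont t y0 : contAt N (fun y => sv t y) y0.
Proof.
 unfold svar. apply contAt_minus; [apply contAt_plus|]; [apply contAt_dot | |]; apply contAt_const.
Qed.

Lemma exp_svar_space_cont m t y0 : contAt N (fun y => exp (m * sv t y)) y0.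
Proof.
 apply (contAt_comp N exp (fun y => m * sv t y)).
 - apply derivable_continuous_pt, derivable_pt_exp.
 - apply contAt_mult; [apply contAt_const | apply svar_space_cont].
Qed.

Lemma V_space_cont t : contRn N (V t).
Proof.
 apply contRn_At; intros y0. unfold v1. apply contAt_minus.
 - apply contAt_mult; [apply exp_svar_space_cont | apply contAt_transl; exact (Hphic _)].
 - apply contAt_mult; [apply contAt_mult | apply contAt_transl; exact (Hphi1c _)].
   + apply contAt_const.
   + apply exp_svar_space_cont.
Qed.

Lemma bphi0_space_cont : contRn N (fun y => bphi0 y).
Proof.
 apply contRn_At; intros y0. apply contAt_mult; [apply contAt_const|]. apply contAt_transl; exact (Hphi0c _).
Qed.

(* Near any point, U(t, .) is either max(b phi0, V) (if sv < M) or V (if sv > M - 2 delta0). *)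
Lemma ulow_space_cont t : contRn N (U t).
Proof.
 apply contRn_At; intros y0. destruct (Rlt_le_dec (sv t y0) M) as [h|h].
 - apply contAt_local with (h := fun y => Rmax (bphi0 y) (V t y)) (d := M - sv t y0); [lra| |].
   + intros y Hy. apply ulow_near. pose proof (svar_close t y y0 _ Hy). lra.
   + apply contAt_max; [exact (bphi0_space_cont _) | exact (V_space_cont t _)].
 - apply contAt_local with (h := V t) (d := 2 * delta0); [lra| |exact (V_space_cont t _)].
   intros y Hy. apply ulow_far. pose proof (svar_close t y y0 _ Hy). lra.
Qed.

Lemma kernel_cont W x : contRn N W -> contRn N (fun y => k (vsub N y x) * W y).
Proof.
 intros HW. apply contRn_At; intros y0. apply contAt_mult; [apply contAt_shift; exact (Hkc _) | exact (HW _)].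
Qed.

(* Where U and V agree, the nonlocal term is larger for U and the local terms coincide. *)
Lemma rhs_V_le_rhs_ulow t x : U t x = V t x ->
  Ez_rhs N k delta0 f z V t x <= Ez_rhs N k delta0 f z U t x.
Proof.
 intros E. unfold Ez_rhs. rewrite E.
 assert (boxint N (fun y => k (vsub N y x) * V t y) x delta0
         <= boxint N (fun y => k (vsub N y x) * U t y) x delta0).
 { apply boxint_mono; [lra | apply kernel_cont, V_space_cont | apply kernel_cont, ulow_space_cont|].
   intros y. apply Rmult_le_compat_l; [apply Hk_nonneg | apply V_le_ulow]. }
 lra.
Qed.

(* Where U = b phi0 away from the strip, U >= b phi0 on the support of k(. - x),
   so the right-hand side dominates that of b phi0, which is nonnegative. *)
Lemma rhs_ulow_nonneg t x : sv t x < M - 2 * delta0 -> U t x = bphi0 x ->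
  0 <= Ez_rhs N k delta0 f z U t x.
Proof.
 intros Hs E. unfold Ez_rhs. rewrite E.
 assert (boxint N (fun y => k (vsub N y x) * bphi0 y) x delta0
         <= boxint N (fun y => k (vsub N y x) * U t y) x delta0).
 { apply boxint_mono;
     [lra | apply kernel_cont, bphi0_space_cont | apply kernel_cont, ulow_space_cont|].
   intros y. destruct (Rlt_le_dec (vnorm N (vsub N y x)) delta0) as [h|h].
   - apply Rmult_le_compat_l; [apply Hk_nonneg|]. apply bphi0_le_ulow.
     pose proof (svar_close t y x _ h). lra.
   - rewrite Hk_zero by exact h. lra. }
 pose proof (Hb_sub x). lra.
Qed.

Lemma svar_time_cont x t : continuity_pt (fun r => sv r x) t.
Proof. apply derivable_continuous_pt. unfold svar. reg. Qed.

Lemma V_time_derivable x t : exists l, derivable_pt_lim (fun r => V r x) t l.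
Proof.
 assert (D : derivable_pt (fun r => V r x) t) by (unfold v1, svar; reg).
 destruct D as [l Hl]. exists l; exact Hl.
Qed.

Lemma V_time_cont x t : continuity_pt (fun r => V r x) t.
Proof.
 destruct (V_time_derivable x t) as [l Hl]. apply derivable_continuous_pt. exists l; exact Hl.
Qed.

Lemma ulow_time_cont x : continuity (fun t => U t x).
Proof.
 intros t. destruct (Rlt_le_dec (sv t x) M) as [h|h].
 - destruct (near_lt _ t M (svar_time_cont x t) h) as [d [Hd Hnear]].
   apply cpt_local with (h := fun r => Rmax (bphi0 x) (V r x)).
   + exists d; split; [exact Hd|]. intros r Hr. apply ulow_near, Hnear, Hr.
   + apply (cpt_F2 (fun _ => bphi0 x) (fun r => V r x) Rmax).
     * apply continuity_pt_const. intros u v; reflexivity.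
     * apply V_time_cont.
     * apply cont2_max.
 - destruct (near_gt _ t (M - 2 * delta0) (svar_time_cont x t) ltac:(lra)) as [d [Hd Hnear]].
   apply cpt_local with (h := fun r => V r x); [|apply V_time_cont].
   exists d; split; [exact Hd|]. intros r Hr. apply ulow_far. left. apply Hnear, Hr.
Qed.

(* Off the level set V = b phi0, U(., x) locally coincides with V(., x) or with
   the constant b phi0(x + z), hence is differentiable. *)
Lemma ulow_time_derivable x t : V t x <> bphi0 x ->
  exists l, derivable_pt_lim (fun r => U r x) t l.
Proof.
 intros Hne.
 destruct (Rlt_le_dec (M - 2 * delta0) (sv t x)) as [h|h].
 - destruct (near_gt _ t _ (svar_time_cont x t) h) as [d [Hd Hnear]].
   destruct (V_time_derivable x t) as [l Hl]. exists l.
   apply deriv_local with (h := fun r => V r x); [|exact Hl].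
   exists d; split; [exact Hd|]. intros r Hr. apply ulow_far. left. apply Hnear, Hr.
 - destruct (near_lt _ t M (svar_time_cont x t) ltac:(lra)) as [d [Hd Hnear]].
   destruct (Rlt_le_dec (bphi0 x) (V t x)) as [h2|h2].
   + destruct (near_gt _ t _ (V_time_cont x t) h2) as [d2 [Hd2 Hnear2]].
     destruct (V_time_derivable x t) as [l Hl]. exists l.
     apply deriv_local with (h := fun r => V r x); [|exact Hl].
     exists (Rmin d d2); split; [apply Rmin_glb_lt; auto|].
     intros r Hr. pose proof (Rmin_l d d2). pose proof (Rmin_r d d2).
     rewrite ulow_near by (apply Hnear; lra). apply Rmax_right. left. apply Hnear2. lra.
   + assert (h3 : V t x < bphi0 x) by (destruct h2; [assumption | contradiction]).
     destruct (near_lt _ t _ (V_time_cont x t) h3) as [d2 [Hd2 Hnear2]]. exists 0.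
     apply deriv_local with (h := fun _ => bphi0 x); [|apply derivable_pt_lim_const].
     exists (Rmin d d2); split; [apply Rmin_glb_lt; auto|].
     intros r Hr. pose proof (Rmin_l d d2). pose proof (Rmin_r d d2).
     rewrite ulow_near by (apply Hnear; lra). apply Rmax_left. left. apply Hnear2. lra.
Qed.

Lemma V_minus_bphi0 t x : V t x - bphi0 x =
  exp (- mu * sv t x)
  * expsum (phi (vadd N x z)) (d1 * phi1 (vadd N x z)) (bphi0 x) (mu - mu1) mu (sv t x).
Proof.
 unfold v1, expsum. set (u := sv t x).
 assert (E1 : exp (- mu * u) * exp ((mu - mu1) * u) = exp (- mu1 * u))
   by (rewrite <- exp_plus; f_equal; ring).
 assert (E2 : exp (- mu * u) * exp (mu * u) = 1)
   by (rewrite <- exp_plus; replace (- mu * u + mu * u) with 0 by ring; apply exp_0).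
 rewrite <- E1. replace (b * phi0 (vadd N x z)) with (b * phi0 (vadd N x z) * 1) at 1 by ring.
 rewrite <- E2. ring.
Qed.

(* When c <> 0 the level set {t | V(t,x) = b phi0(x+z)} has at most two points,
   because t -> sv t x is injective and the exponential sum has at most two zeros. *)
Lemma V_level_two_points x : c <> 0 ->
  exists t1 t2, forall t, V t x = bphi0 x -> t = t1 \/ t = t2.
Proof.
 intros Hc. apply at_most_two_points. intros r1 r2 r3 E1 E2 E3.
 assert (Hzero : forall r, V r x = bphi0 x -> expsum (phi (vadd N x z)) (d1 * phi1 (vadd N x z))
                    (bphi0 x) (mu - mu1) mu (sv r x) = 0).
 { intros r Er. pose proof (V_minus_bphi0 r x) as Id.
   rewrite Er, Rminus_diag in Id. symmetry in Id.
   pose proof (exp_pos (- mu * sv r x)).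
   apply Rmult_integral in Id as [Hexp|Hexp]; [lra | exact Hexp]. }
 assert (Hinj : forall r r', sv r x = sv r' x -> r = r').
 { intros r r' Er. unfold svar in Er. apply (Rmult_eq_reg_l c); [lra | exact Hc]. }
 assert (Ha : bphi0 x <> 0) by (pose proof (Hphi0pos (vadd N x z)); nra).
 assert (Hm : mu <> 0) by (intro; lra).
 assert (He : mu - mu1 <> mu) by (intro; lra).
 destruct (expsum_three_zeros _ _ _ _ _ _ _ _ Ha Hm He
             (Hzero r1 E1) (Hzero r2 E2) (Hzero r3 E3)) as [H|[H|H]];
   apply Hinj in H; auto.
Qed.

Lemma ulow_nondiff_null x :
  null_set (fun t => ~ exists l, derivable_pt_lim (fun r => U r x) t l).
Proof.
 destruct (Req_dec c 0) as [Hc0|Hc0].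
 - (* U(., x) is constant *)
   apply (null_two _ 0 0). intros t Hnd. exfalso. apply Hnd.
   exists 0. apply deriv_local with (h := fun _ => U 0 x); [|apply derivable_pt_lim_const].
   exists 1; split; [lra|]. intros r _.
   unfold ulow, v1, svar. rewrite Hc0, !Rmult_0_l. reflexivity.
 - destruct (V_level_two_points x Hc0) as [t1 [t2 Ht12]].
   apply (null_two _ t1 t2). intros t Hnd. apply Ht12.
   apply NNPP. intro Hne. apply Hnd, ulow_time_derivable, Hne.
Qed.

(* The differential inequality: compare with V where U = V, with the constant
   b phi0(x+z) elsewhere (both touch U from below at t). *)
Lemma ulow_time_ineq x t l : derivable_pt_lim (fun r => U r x) t l ->
  l <= Ez_rhs N k delta0 f z U t x.
Proof.
 intros Hl. destruct (Req_dec (U t x) (V t x)) as [E|NE].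
 - destruct (V_time_derivable x t) as [lV HlV].
   assert (l = lV).
   { apply (deriv_touching (fun r => V r x) _ t lV l HlV Hl (eq_sym E)).
     exists 1; split; [lra|]. intros; apply V_le_ulow. }
   subst l. eapply Rle_trans; [apply HV_sub, HlV | apply rhs_V_le_rhs_ulow, E].
 - assert (Hs : sv t x < M - 2 * delta0).
   { destruct (Rlt_le_dec (sv t x) (M - 2 * delta0)) as [h|h]; auto.
     exfalso. apply NE, ulow_far, h. }
   assert (Ea : U t x = bphi0 x).
   { rewrite ulow_near in NE |- * by lra. unfold Rmax in *.
     destruct (Rle_dec _ _); [contradiction | reflexivity]. }
   assert (l = 0).
   { apply (deriv_touching (fun _ => bphi0 x) _ t 0 l (derivable_pt_lim_const _ t) Hl (eq_sym Ea)).
     destruct (near_lt _ t M (svar_time_cont x t) ltac:(lra)) as [d [Hd Hnear]].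
     exists d; split; auto. intros r Hr. apply bphi0_le_ulow, Hnear, Hr. }
   subst l. apply rhs_ulow_nonneg; auto.
Qed.

Lemma ulow_subsolution : subsolution N k delta0 f z U.
Proof.
 intros x. split; [|split].
 - apply ulow_time_cont.
 - apply ulow_nondiff_null.
 - apply ulow_time_ineq.
Qed.

End Gluing.

Theorem proposition3p4
  (N : nat) (HN : (1 <= N)%nat)
  (k : Rn N -> R) (delta0 : R) (f : Rn N -> R -> R) (p : nat -> R)
  (xi : Rn N) (c mu mu1 mustar cstar : R) (phi phi1 phi0 : Rn N -> R)
  (d0 d1 b M : R)
  (* kernel k *)
  (Hk_C1 : C1fun N k) (Hdelta0 : 0 < delta0)
  (Hk_pos : forall x, vnorm N x < delta0 -> 0 < k x)
  (Hk_zero : forall x, delta0 <= vnorm N x -> k x = 0)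
  (Hk_int : boxint N k (vzero N) delta0 = 1)
  (* periodicity of f *)
  (Hp : forall i, (i < N)%nat -> 0 < p i)
  (Hf_per : forall i x u, (i < N)%nat ->
      f (vadd N x (vscale N (p i) (vbasis N i))) u = f x u)
  (* (H1) *)
  (H1 : exists F : Rn (S N) -> R,
      C1fun (S N) F /\ (forall x u, 0 <= u -> F (u, x) = f x u) /\
      exists kappa, 0 < kappa /\
        forall x u l, 0 <= u -> derivable_pt_lim (fun s => F (s, x)) u l -> l <= - kappa)
  (H1' : forall x, exists U, forall u, U <= u -> f x u < 0)
  (* (H2) *)
  (H2 : forall xi', dot N xi' xi' = 1 ->
      0 < lambda0 N p k delta0 (fun x => f x 0) xi' 0)
  (* (H3) *)
  (H3 : forall xi' m, dot N xi' xi' = 1 -> 0 <= m ->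
      principal_eigenvalue N p k delta0 (fun x => f x 0) xi' m
        (lambda0 N p k delta0 (fun x => f x 0) xi' m))
  (* (H4) *)
  (H4 : forall x u, u <= 0 -> f x u = f x 0)
  (* the known facts on c^*(xi) and mu^*(xi) *)
  (Hxi : dot N xi xi = 1)
  (Hcstar : is_glb (fun r => exists m, 0 < m /\
                 r = lambda0 N p k delta0 (fun x => f x 0) xi m / m) cstar)
  (Hmustar_pos : 0 < mustar)
  (Hmustar_eq : cstar = lambda0 N p k delta0 (fun x => f x 0) xi mustar / mustar)
  (Hmustar_lt : forall m, 0 < m < mustar ->
      cstar < lambda0 N p k delta0 (fun x => f x 0) xi m / m)
  (* data *)
  (Hc : cstar < c)
  (Hmu : 0 < mu < mustar)
  (Hmu_eq : lambda0 N p k delta0 (fun x => f x 0) xi mu = c * mu)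
  (Hmu1 : mu < mu1 < Rmin (2 * mu) mustar)
  (Hmu1_c : cstar < lambda0 N p k delta0 (fun x => f x 0) xi mu1 / mu1 < c)
  (Hphi : Xp N p phi /\ (forall x, 0 < phi x) /\
      (forall x, Lop N k delta0 (fun x => f x 0) xi mu phi x
                 = lambda0 N p k delta0 (fun x => f x 0) xi mu * phi x) /\
      is_lub (fun r => exists x, r = phi x) 1)
  (Hphi1 : Xp N p phi1 /\ (forall x, 0 < phi1 x) /\
      (forall x, Lop N k delta0 (fun x => f x 0) xi mu1 phi1 x
                 = lambda0 N p k delta0 (fun x => f x 0) xi mu1 * phi1 x) /\
      is_lub (fun r => exists x, r = phi1 x) 1)
  (Hphi0 : Xp N p phi0 /\ (forall x, 0 < phi0 x) /\
      (forall x, Lop N k delta0 (fun x => f x 0) xi 0 phi0 x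
                 = lambda0 N p k delta0 (fun x => f x 0) xi 0 * phi0 x) /\
      is_lub (fun r => exists x, r = phi0 x) 1)
  (* choice of d0, d1 *)
  (Hd0 : forall d, d0 <= d -> forall z T, 0 < T -> forall t x l,
      derivable_pt_lim (fun s => v1 N xi c mu mu1 d phi phi1 z T s x) t l ->
      l <= Ez_rhs N k delta0 f z (fun s y => v1 N xi c mu mu1 d phi phi1 z T s y) t x)
  (Hd1 : d0 <= d1)
  (* choice of b *)
  (Hb : 0 < b)
  (Hb_sub : forall x z,
      0 <= boxint N (fun y => k (vsub N y x) * (b * phi0 (vadd N y z))) x delta0
           - b * phi0 (vadd N x z)
           + f (vadd N x z) (b * phi0 (vadd N x z)) * (b * phi0 (vadd N x z)))
  (* choice of M *)
  (HM : 0 < M)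
  (HM_b : forall z T t x, 0 < T ->
      M - 2 * delta0 <= svar N xi c T t x <= M ->
      b <= v1 N xi c mu mu1 d1 phi phi1 z T t x) :
  forall z T, 0 < T ->
    subsolution N k delta0 f z (fun t x => ulow N xi c mu mu1 d1 b M phi phi1 phi0 z T t x).
Proof.
 intros z T HT.
 destruct Hphi as [[Hphic _] _]. destruct Hphi1 as [[Hphi1c _] _].
 destruct Hphi0 as [[Hphi0c _] [Hphi0pos [_ [Hphi0_ub _]]]].
 assert (Hkc : contRn N k)
   by (destruct Hk_C1 as [dk [Hdkc Hdk]]; exact (C1_cont N k dk Hdkc Hdk)).
 assert (Hk_nonneg : forall w, 0 <= k w).
 { intro w. destruct (Rlt_le_dec (vnorm N w) delta0) as [h|h].
   - left. apply Hk_pos, h.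
   - right. symmetry. apply Hk_zero, h. }
 assert (Hphi0le : forall y, phi0 y <= 1) by (intro y; apply Hphi0_ub; exists y; reflexivity).
 apply ulow_subsolution; try assumption.
 - apply Hmu.
 - apply Hmu1.
 - exact (Hd0 d1 Hd1 z T HT).
 - intros x. exact (Hb_sub x z).
 - intros t x. exact (HM_b z T t x HT).
Qed.
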